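(* Let $\eta>0$, $L>0$, and for each $t$ let $\widehat\varphi_t$ be a convex function with $C\subset\operatorname{dom}\partial\widehat\varphi_t$ whose subdifferential is $L$-Lipschitz on $C$, i.e. $\|g-h\|\le L\|x-y\|$ for all $x,y\in C$, $g\in\partial\widehat\varphi_t(x)$, $h\in\partial\widehat\varphi_t(y)$. Run OGP: $\widetilde{x}_{t+1}=P_C(\widetilde{x}_t-\eta x_t^* )$ with $x_t^*\in\partial\varphi_t(x_t)$, $x_{t+1}=P_C(\widetilde{x}_{t+1}-\eta\widehat{x}_{t+1}^* )$, $\widetilde x_1\in C$, with predictions $\widehat{x}_t^*\in\partial\widehat\varphi_t(\widetilde{x}_t)$. Then for every $T\ge1$ and every $z_1,\dots,z_T\in C$, with $P_T=\sum_{t=2}^T\|z_t-z_{t-1}\|$, $$\sum_{t=1}^T\varphi_t(x_t)-\varphi_t(z_t)\le \frac{\rho(\rho+2P_T)}{2\eta}+\eta\sum_{t=1}^T\Big(\sup_{x\in C,\ g\in\partial\varphi_t(x),\ \widehat g\in\partial\widehat\varphi_t(x)}\|g-\widehat g\|^2+\mathbf 1\{\eta>\tfrac{1}{\sqrt2 L}\}\,L^2\|x_t-\widetilde{x}_t\|^2\Big).$$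
   Context: $H$ is a real Hilbert space; $C\subset H$ is nonempty, closed, convex with diameter $\rho=\sup_{x,y\in C}\|x-y\|<\infty$; $P_C$ is the metric projection onto $C$; each loss $\varphi_t$ is convex with $C\subset\operatorname{dom}\partial\varphi_t$; $\mathbf 1\{\cdot\}$ is the zero-one indicator. *)

From HB Require Import structures.
From mathcomp Require Import all_boot all_order all_algebra.
From mathcomp Require Import all_classical all_reals all_analysis.
Set Implicit Arguments. Unset Strict Implicit. Unset Printing Implicit Defensive.
Import Order.TTheory GRing.Theory Num.Theory.
Import numFieldNormedType.Exports.
Local Open Scope classical_set_scope.
Local Open Scope ring_scope.

(* A real Hilbert space is a complete normed space whose norm comes from an
   inner product [ip]: [ip] is symmetric, linear in the first argument and
   [ip x x = `|x|^2]. *)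
Definition is_inner_product (R : realType) (H : completeNormedModType R)
    (ip : H -> H -> R) : Prop :=
  [/\ forall x y, ip x y = ip y x,
      forall (a : R) x y z, ip (a *: x + y) z = a * ip x z + ip y z
    & forall x, ip x x = `|x| ^+ 2].

Definition convex_set_H (R : realType) (H : completeNormedModType R)
    (C : set H) : Prop :=
  forall x y (l : R), C x -> C y -> 0 <= l <= 1 -> C (l *: x + (1 - l) *: y).

Definition convex_ext (R : realType) (H : completeNormedModType R)
    (f : H -> \bar R) : Prop :=
  (forall x, f x != -oo%E) /\
  forall (x y : H) (l : R), 0 < l < 1 ->
    (f (l *: x + (1 - l) *: y)%R <= l%:E * f x + (1 - l)%:E * f y)%E.

Definition subdiff (R : realType) (H : completeNormedModType R)
    (ip : H -> H -> R) (f : H -> \bar R) (x : H) : set H :=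
  [set g | f x \is a fin_num /\
           forall y, (f x + (ip g (y - x))%:E <= f y)%E].

Definition dom_subdiff (R : realType) (H : completeNormedModType R)
    (ip : H -> H -> R) (f : H -> \bar R) : set H :=
  [set x | subdiff ip f x !=set0].

Definition is_metric_projection (R : realType) (H : completeNormedModType R)
    (C : set H) (P : H -> H) : Prop :=
  forall x, C (P x) /\ forall y, C y -> `|x - P x| <= `|x - y|.

Definition diameter (R : realType) (H : completeNormedModType R)
    (C : set H) : \bar R :=
  ereal_sup [set e | exists x y, [/\ C x, C y & e = (`|x - y|)%:E]].

Definition pred_error (R : realType) (H : completeNormedModType R)
    (ip : H -> H -> R) (C : set H) (phi phih : H -> \bar R) : \bar R :=
  ereal_sup [set e | exists x g gh,
    [/\ C x, subdiff ip phi x g, subdiff ip phih x gh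
      & e = (`|g - gh| ^+ 2)%:E]].

From HB Require Import structures.
From mathcomp Require Import all_boot all_order all_algebra.
From mathcomp Require Import all_classical all_reals all_analysis.
From mathcomp Require Import ring lra.
Set Implicit Arguments. Unset Strict Implicit.
Import Order.TTheory GRing.Theory Num.Theory.
Import numFieldNormedType.Exports.
Local Open Scope classical_set_scope.
Local Open Scope ring_scope.

(* Optimistic gradient descent is two projected steps per round; the
   obtuse-angle characterisation of [P_C] turns the pair of steps into a
   three-point inequality bounding the linearised regret against [z_t] by
   (|x~_t - z_t|^2 - |x~_(t+1) - z_t|^2)/2 minus |x_t - x~_t|^2/2 plus
   eta^2 |g_t - g^_t|^2/2.  Splitting g_t - g^_t through a subgradient of
   phi^_t at x_t and using the L-Lipschitz subdifferential produces the
   prediction error and an L^2 |x_t - x~_t|^2 term, which the negative term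
   absorbs as soon as 2 eta^2 L^2 <= 1.  Summing, the distance terms telescope
   up to the comparator drift, bounded by rho^2 + 2 rho P_T. *)

Section InnerProduct.
Variables (R : realType) (H : completeNormedModType R) (ip : H -> H -> R).
Hypothesis ip_inner : is_inner_product ip.

Lemma ipDl x y z : ip (x + y) z = ip x z + ip y z.
Proof.
by case: ip_inner => _ lin _; rewrite -[x]scale1r lin mul1r scale1r.
Qed.

Lemma ipZl a x z : ip (a *: x) z = a * ip x z.
Proof.
have ip0l : ip 0 z = 0 by have := ipDl 0 0 z; rewrite addr0; lra.
by case: ip_inner => _ lin _; have := lin a x 0 z; rewrite addr0 ip0l addr0.
Qed.

Lemma ipNl x z : ip (- x) z = - ip x z.
Proof. by rewrite -scaleN1r ipZl mulN1r. Qed.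

Lemma ipBl x y z : ip (x - y) z = ip x z - ip y z.
Proof. by rewrite ipDl ipNl. Qed.

Lemma ipC x y : ip x y = ip y x.
Proof. by case: ip_inner. Qed.

Lemma ipDr x y z : ip z (x + y) = ip z x + ip z y.
Proof. by rewrite !(ipC z) ipDl. Qed.

Lemma ipZr a x z : ip z (a *: x) = a * ip z x.
Proof. by rewrite !(ipC z) ipZl. Qed.

Lemma ipNr x z : ip z (- x) = - ip z x.
Proof. by rewrite !(ipC z) ipNl. Qed.

Lemma ip_norm x : ip x x = `|x| ^+ 2.
Proof. by case: ip_inner. Qed.

Lemma sqr_normD a b : `|a + b| ^+ 2 = `|a| ^+ 2 + 2 * ip a b + `|b| ^+ 2.
Proof. by rewrite -!ip_norm ipDl !ipDr (ipC b a); lra. Qed.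

Lemma sqr_normB a b : `|a - b| ^+ 2 = `|a| ^+ 2 - 2 * ip a b + `|b| ^+ 2.
Proof. by rewrite sqr_normD ipNr normrN; lra. Qed.

Lemma metric_projection_obtuse (C : set H) (P : H -> H) y c :
  convex_set_H C -> is_metric_projection C P -> C c ->
  ip (y - P y) (c - P y) <= 0.
Proof.
move=> convC projP Cc; have [CPy Pmin] := projP y.
rewrite leNgt; apply/negP => a_gt0.
set a := ip _ _ in a_gt0; set n := `|c - P y| ^+ 2.
have n_ge0 : 0 <= n by exact: sqr_ge0.
(* Moving from [P y] towards [c] by [l] would get strictly closer to [y]. *)
set l := a / (a + n).
have an_gt0 : 0 < a + n by lra.
have lan : l * (a + n) = a by rewrite /l mulfVK // gt_eqF.
have l_gt0 : 0 < l by rewrite divr_gt0.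
have l_le1 : l <= 1 by rewrite ler_pdivrMr // mul1r; lra.
have := Pmin _ (convC c (P y) l Cc CPy _); rewrite l_le1 ltW //= => /(_ isT).
have -> : y - (l *: c + (1 - l) *: P y) = (y - P y) - l *: (c - P y).
  by rewrite scalerBl scale1r scalerBr addrCA opprD addrA.
move=> closer; have : `|y - P y| ^+ 2 <= `|y - P y - l *: (c - P y)| ^+ 2.
  by rewrite lerXn2r ?nnegrE.
by rewrite (sqr_normB (y - P y)) normrZ exprMn ipZr -/a -/n gtr0_norm //; nra.
Qed.

Lemma optimistic_step_le (u u' w g gh z : H) (eta : R) :
  ip (u - eta *: g - u') (z - u') <= 0 ->
  ip (u - eta *: gh - w) (u' - w) <= 0 ->
  eta * ip g (w - z) <= (`|u - z| ^+ 2 - `|u' - z| ^+ 2) / 2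
     - `|u - w| ^+ 2 / 2 + eta ^+ 2 * `|g - gh| ^+ 2 / 2.
Proof.
rewrite (addrAC u (- (eta *: g))) (addrAC u (- (eta *: gh))).
rewrite -(opprB u' z) -(opprB w u') !ipNr (ipBl (u - u')) (ipBl (u - w)) !ipZl.
move=> obtuse_u' obtuse_w.
have u_z : `|u - z| ^+ 2 = `|u - u'| ^+ 2 + 2 * ip (u - u') (u' - z)
                           + `|u' - z| ^+ 2 by rewrite -sqr_normD addrA subrK.
have u_u' : `|u - u'| ^+ 2 = `|u - w| ^+ 2 + 2 * ip (u - w) (w - u')
                           + `|w - u'| ^+ 2 by rewrite -sqr_normD addrA subrK.
have := sqr_ge0 `|eta *: (g - gh) - (w - u')|.
rewrite sqr_normB normrZ exprMn real_normK ?num_real // ipZl (ipBl g).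
have -> : w - z = (w - u') + (u' - z) by rewrite addrA subrK.
rewrite (ipDr (w - u')); lra.
Qed.

Lemma subdiff_gap (f : H -> \bar R) x z g :
  subdiff ip f x g -> f z \is a fin_num ->
  fine (f x) - fine (f z) <= ip g (x - z).
Proof.
move=> [fx sub_g] fz; have := sub_g z.
by rewrite -(fineK fx) -(fineK fz) -EFinD lee_fin -(opprB x z) ipNr; lra.
Qed.

End InnerProduct.

Lemma sqr_normB_le2 (R : realType) (V : normedModType R) (a b c : V) :
  `|a - c| ^+ 2 <= 2 * `|a - b| ^+ 2 + 2 * `|b - c| ^+ 2.
Proof.
have : `|a - c| ^+ 2 <= (`|a - b| + `|b - c|) ^+ 2.
  by rewrite lerXn2r ?nnegrE ?addr_ge0 ?ler_distD.
have := sqr_ge0 (`|a - b| - `|b - c|); nra.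
Qed.

(* For [eta <= 1 / (sqrt 2 L)] the left-hand side is nonpositive. *)
Lemma stepsize_indicator_le (R : realType) (eta L s : R) :
  0 < eta -> 0 < L -> 0 <= s ->
  (eta ^+ 2 * L ^+ 2 - 1 / 2) * s
  <= eta ^+ 2 * ((if eta > (Num.sqrt 2 * L)^-1 then 1 else 0) * L ^+ 2 * s).
Proof.
move=> eta_gt0 L_gt0 s_ge0; case: ifPn => [_|]; first nra.
rewrite -leNgt -div1r ler_pdivlMr ?mulr_gt0 ?sqrtr_gt0 // => small.
have : (eta * (Num.sqrt 2 * L)) ^+ 2 <= 1.
  by rewrite exprn_ile1 // !mulr_ge0 ?sqrtr_ge0 ?ltW.
rewrite !exprMn sqr_sqrtr //; nra.
Qed.

Lemma ogp_round_le (R : realType) (H : completeNormedModType R)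
    (ip : H -> H -> R) (C : set H) (P : H -> H) (eta L : R)
    (xt xt' x z g gh h : H) :
  is_inner_product ip -> convex_set_H C -> is_metric_projection C P ->
  0 < eta -> 0 < L -> C z ->
  xt' = P (xt - eta *: g) -> x = P (xt - eta *: gh) ->
  `|h - gh| <= L * `|x - xt| ->
  eta * ip g (x - z) <= (`|xt - z| ^+ 2 - `|xt' - z| ^+ 2) / 2
    + eta ^+ 2 * (`|g - h| ^+ 2
       + (if eta > (Num.sqrt 2 * L)^-1 then 1 else 0) * L ^+ 2 * `|x - xt| ^+ 2).
Proof.
move=> ip_inner convC projP eta_gt0 L_gt0 Cz def_xt' def_x h_gh.
have Cxt' : C xt' by rewrite def_xt'; case: (projP (xt - eta *: g)).
have obtuse_xt' := metric_projection_obtuse ip_inner (xt - eta *: g) convC projP Cz.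
have obtuse_x := metric_projection_obtuse ip_inner (xt - eta *: gh) convC projP Cxt'.
rewrite -def_xt' in obtuse_xt'; rewrite -def_x in obtuse_x.
have := optimistic_step_le ip_inner obtuse_xt' obtuse_x.
rewrite (distrC xt x) => step.
have g_gh := sqr_normB_le2 g h gh.
have h_gh2 : `|h - gh| ^+ 2 <= L ^+ 2 * `|x - xt| ^+ 2.
  by rewrite -exprMn !expr2 ler_pM ?normr_ge0.
have := stepsize_indicator_le eta_gt0 L_gt0 (sqr_ge0 `|x - xt|).
have := sqr_ge0 eta; nra.
Qed.

Section Telescoping.
Variables (R : realType) (H : completeNormedModType R) (C : set H) (rho : R).
Hypothesis diamC : diameter C = rho%:E.

Lemma diameter_le a b : C a -> C b -> `|a - b| <= rho.
Proof. by move=> Ca Cb; rewrite -lee_fin -diamC; apply: ereal_sup_ubound; exists a, b. Qed.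

Lemma sqr_dist_shift_le u z z' : C u -> C z -> C z' ->
  `|u - z'| ^+ 2 - `|u - z| ^+ 2 <= 2 * rho * `|z' - z|.
Proof.
move=> Cu Cz Cz'; have := diameter_le Cu Cz; have := diameter_le Cu Cz'.
have := ler_distD z u z'; rewrite (distrC z z').
have := normr_ge0 (u - z); have := normr_ge0 (u - z'); have := normr_ge0 (z' - z).
set a := `|u - z'|; set b := `|u - z|; set d := `|z' - z|; nra.
Qed.

Lemma sum_sqr_dist_le (u z : nat -> H) (n : nat) :
  (forall t, (0 < t)%N -> C (u t)) -> (forall t, (1 <= t <= n)%N -> C (z t)) ->
  (1 <= n)%N ->
  \sum_(1 <= t < n.+1) (`|u t - z t| ^+ 2 - `|u t.+1 - z t| ^+ 2)
    + `|u n.+1 - z n| ^+ 2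
  <= rho ^+ 2 + 2 * rho * \sum_(2 <= t < n.+1) `|z t - z t.-1|.
Proof.
move=> Cu; elim: n => [//|[|n] IH] Cz _.
  rewrite big_nat1 big_geq // mulr0 addr0 subrK.
  have := diameter_le (Cu 1%N isT) (Cz 1%N isT).
  have := normr_ge0 (u 1%N - z 1%N); nra.
have {IH} := IH (fun t tn => Cz t (introT andP (conj (andP tn).1 (leqW (andP tn).2)))) isT.
have := sqr_dist_shift_le (Cu n.+2 isT) (Cz n.+1 (leqW (leqnn _))) (Cz n.+2 (leqnn _)).
rewrite [X in _ -> _ -> X + _ <= _]big_nat_recr // [X in _ -> _ -> _ <= _ + _ * X]big_nat_recr //=.
lra.
Qed.

Lemma sum_regret_le (eta : R) (u z : nat -> H) (d w : nat -> R) (T : nat) :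
  0 < eta -> (forall t, (0 < t)%N -> C (u t)) ->
  (forall t, (1 <= t <= T)%N -> C (z t)) -> (1 <= T)%N ->
  (forall t, (1 <= t <= T)%N ->
     eta * d t <= (`|u t - z t| ^+ 2 - `|u t.+1 - z t| ^+ 2) / 2 + eta ^+ 2 * w t) ->
  \sum_(1 <= t < T.+1) d t
  <= rho * (rho + 2 * \sum_(2 <= t < T.+1) `|z t - z t.-1|) / (2 * eta)
     + eta * \sum_(1 <= t < T.+1) w t.
Proof.
move=> eta_gt0 Cu Cz T_ge1 round.
have := sum_sqr_dist_le Cu Cz T_ge1; have := sqr_ge0 `|u T.+1 - z T|.
have := ler_sum_nat (m := 1%N) (n := T.+1) (F := fun t => eta * d t)
  (G := fun t => (`|u t - z t| ^+ 2 - `|u t.+1 - z t| ^+ 2) / 2 + eta ^+ 2 * w t) round.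
rewrite -mulr_sumr big_split /= -mulr_suml -mulr_sumr.
set D := \sum_(_ <= _ < _) d _; set W := \sum_(_ <= _ < _) w _.
set A := \sum_(_ <= _ < _) _; set S := \sum_(_ <= _ < _) _ => sumD _ telescope.
have scale : eta * (rho * (rho + 2 * S) / (2 * eta)) = rho * (rho + 2 * S) / 2.
  by field; rewrite gt_eqF.
by rewrite -(ler_pM2l eta_gt0) mulrDr scale mulrA -expr2; nra.
Qed.

End Telescoping.

Lemma pred_error_ge (R : realType) (H : completeNormedModType R)
    (ip : H -> H -> R) (C : set H) (phi phih : H -> \bar R) y g gh :
  C y -> subdiff ip phi y g -> subdiff ip phih y gh ->
  ((`|g - gh| ^+ 2)%:E <= pred_error ip C phi phih)%E.
Proof. by move=> Cy g_sub gh_sub; apply: ereal_sup_ubound; exists y, g, gh. Qed.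

Lemma subgradient_selection (R : realType) (H : completeNormedModType R)
    (ip : H -> H -> R) (C : set H) (f : nat -> H -> \bar R) (y : nat -> H) :
  (forall t, (0 < t)%N -> C `<=` dom_subdiff ip (f t)) ->
  (forall t, (0 < t)%N -> C (y t)) ->
  {g : nat -> H & forall t, (0 < t)%N -> subdiff ip (f t) (y t) (g t)}.
Proof.
move=> dom Cy; apply: (boolp.choice (P := fun t g => (0 < t)%N -> subdiff ip (f t) (y t) g)).
case=> [|t]; first by exists 0.
by have [g g_sub] := dom t.+1 isT _ (Cy t.+1 isT); exists g.
Qed.

Theorem corollary2 (R : realType) (H : completeNormedModType R)
  (ip : H -> H -> R) (C : set H) (PC : H -> H) (rho : R)
  (phi phih : nat -> H -> \bar R) (eta L : R)
  (x xt xs xhs : nat -> H) :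
  is_inner_product ip ->
  C !=set0 -> closed C -> convex_set_H C ->
  diameter C = rho%:E ->
  is_metric_projection C PC ->
  0 < eta -> 0 < L ->
  (forall t, (0 < t)%N -> convex_ext (phi t) /\ C `<=` dom_subdiff ip (phi t)) ->
  (forall t, (0 < t)%N -> convex_ext (phih t) /\ C `<=` dom_subdiff ip (phih t)) ->
  (forall t, (0 < t)%N -> forall y y' g h, C y -> C y' ->
     subdiff ip (phih t) y g -> subdiff ip (phih t) y' h ->
     `|g - h| <= L * `|y - y'|) ->
  C (xt 1%N) ->
  (forall t, (0 < t)%N -> subdiff ip (phi t) (x t) (xs t)) ->
  (forall t, (0 < t)%N -> subdiff ip (phih t) (xt t) (xhs t)) ->
  (forall t, (0 < t)%N -> xt t.+1 = PC (xt t - eta *: xs t)) ->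
  (forall t, (0 < t)%N -> x t = PC (xt t - eta *: xhs t)) ->
  forall (T : nat) (z : nat -> H), (1 <= T)%N ->
  (forall t, (1 <= t <= T)%N -> C (z t)) ->
  let PT := \sum_(2 <= t < T.+1) `|z t - z t.-1| in
  (\sum_(1 <= t < T.+1) (phi t (x t) - phi t (z t))
   <= (rho * (rho + 2 * PT) / (2 * eta))%:E
      + eta%:E * \sum_(1 <= t < T.+1)
          (pred_error ip C (phi t) (phih t)
           + ((if eta > (Num.sqrt 2 * L)^-1 then 1 else 0)
              * L ^+ 2 * `|x t - xt t| ^+ 2)%:E))%E.
Proof.
move=> ip_inner _ _ convC diamC projP eta_gt0 L_gt0 phi_sub phih_sub phih_Lip
  Cxt1 xs_sub xhs_sub def_xt def_x T z T_ge1 Cz.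
cbv zeta; set PT := \sum_(2 <= t < T.+1) _.
have Cxt t : (0 < t)%N -> C (xt t).
  case: t => [|[|t]] // _; rewrite def_xt //.
  by case: (projP (xt t.+1 - eta *: xs t.+1)).
have Cx t : (0 < t)%N -> C (x t).
  by move=> t_gt0; rewrite def_x //; case: (projP (xt t - eta *: xhs t)).
have [h h_sub] := subgradient_selection (fun t t_gt0 => (phih_sub t t_gt0).2) Cx.
have fin_phi_z t : (1 <= t <= T)%N -> phi t (z t) \is a fin_num.
  by move=> tT; have [_ dom] := phi_sub t (andP tT).1; have [g []] := dom _ (Cz t tT).
pose c t := (if eta > (Num.sqrt 2 * L)^-1 then 1 else 0) * L ^+ 2 * `|x t - xt t| ^+ 2.
have -> : (\sum_(1 <= t < T.+1) (phi t (x t) - phi t (z t))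
    = (\sum_(1 <= t < T.+1) (fine (phi t (x t)) - fine (phi t (z t))))%:E)%E.
  rewrite -sumEFin; apply: eq_big_nat => t tT.
  by rewrite EFinB !fineK ?fin_phi_z //; case: (xs_sub t (andP tT).1).
apply: le_trans (_ : ((rho * (rho + 2 * PT) / (2 * eta))
    + eta * \sum_(1 <= t < T.+1) (`|xs t - h t| ^+ 2 + c t))%:E <= _)%E.
  rewrite lee_fin; apply: (sum_regret_le diamC (u := xt) (z := z)
    (d := fun t => fine (phi t (x t)) - fine (phi t (z t))) eta_gt0 Cxt Cz T_ge1) => t tT.
  have t_gt0 := (andP tT).1.
  apply: le_trans (ogp_round_le ip_inner convC projP eta_gt0 L_gt0 (Cz t tT)
    (def_xt t t_gt0) (def_x t t_gt0) (phih_Lip t t_gt0 _ _ _ _ (Cx t t_gt0)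
    (Cxt t t_gt0) (h_sub t t_gt0) (xhs_sub t t_gt0))).
  by rewrite ler_pM2l //; apply: (subdiff_gap ip_inner (xs_sub t t_gt0)); exact: fin_phi_z.
rewrite EFinD; apply: leeD2l; rewrite EFinM; apply: lee_wpmul2l; first by rewrite lee_fin ltW.
rewrite -sumEFin big_nat_cond [X in (_ <= X)%E]big_nat_cond.
apply: lee_sum => t /andP[/andP[t_gt0 _] _]; rewrite EFinD leeD //.
exact: pred_error_ge (Cx t t_gt0) (xs_sub t t_gt0) (h_sub t t_gt0).
Qed.
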